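(* Under the standing assumptions, for every $j$ with $1\le j\le n-1$ and every $z\in\mathbb C$, \begin{align*} \widehat\alpha_2^{(2j)}(z)&=\widehat\alpha_2^{(2j-2)}(z)+(z-a)\,Q_{2,j}^*(\bar z)\,\widehat H_{2,j}^{-1}\,P_{2,j}(a),\\ \widehat\beta_2^{(2j)}(z)&=\widehat\beta_2^{(2j-2)}(z)+(z-a)\,Q_{2,j}^*(\bar z)\,\widehat H_{2,j}^{-1}\,Q_{2,j}(a),\\ \widehat\gamma_2^{(2j)}(z)&=\widehat\gamma_2^{(2j-2)}(z)-(z-a)\,P_{2,j}^*(\bar z)\,\widehat H_{2,j}^{-1}\,P_{2,j}(a),\\ \widehat\delta_2^{(2j)}(z)&=\widehat\delta_2^{(2j-2)}(z)-(z-a)\,P_{2,j}^*(\bar z)\,\widehat H_{2,j}^{-1}\,Q_{2,j}(a). \end{align*}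
   Context: Let $q,n\in\mathbb N$ and let $a<b$ be real numbers. All matrices are complex; $I_q$, $0_q$ are the $q\times q$ identity and zero matrices; for a matrix-valued function $F$, $F^*(\bar z)$ means $(F(\bar z))^*$. Let $s_0,\dots,s_{2n+1}$ be Hermitian $q\times q$ matrices and set $\widehat s_j:=-ab\,s_j+(a+b)s_{j+1}-s_{j+2}$. Define the block Hankel matrices $H_{1,j}:=(s_{l+k})_{l,k=0}^{j}$, $H_{2,j}:=(\widehat s_{l+k})_{l,k=0}^{j}$, $K_{1,j}:=(bs_{l+k}-s_{l+k+1})_{l,k=0}^{j}$, $K_{2,j}:=(-as_{l+k}+s_{l+k+1})_{l,k=0}^{j}$. Standing assumption: $H_{1,n},H_{2,n-1},K_{1,n},K_{2,n}$ are positive definite. Let $T_0:=0_q$ and, for $j\ge1$, let $T_j$ be the $(j+1)\times(j+1)$ block matrix (blocks of size $q\times q$) with $I_q$ in the block positions $(l+1,l)$, $l=0,\dots,j-1$, and $0_q$ elsewhere; $R_j(z):=(I_{(j+1)q}-zT_j)^{-1}$; $v_j:=\mathrm{col}(I_q,0_q,\dots,0_q)\in\mathbb C^{(j+1)q\times q}$. Let $u_{2,0}:=-(a+b)s_0+s_1$ and $u_{2,j}:=\mathrm{col}(u_{2,0},-\widehat s_0,\dots,-\widehat s_{j-1})\in\mathbb C^{(j+1)q\times q}$. For $j\ge1$ let $Y_{2,j}:=\mathrm{col}(\widehat s_j,\dots,\widehat s_{2j-1})$. Schur complements: $\widehat H_{2,0}:=\widehat s_0$, $\widehat H_{2,j}:=\widehat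 s_{2j}-Y_{2,j}^*H_{2,j-1}^{-1}Y_{2,j}$ ($j\ge1$). Polynomials: $P_{2,0}:=I_q$, $Q_{2,0}(z):=-(u_{2,0}+zs_0)$, and for $j\ge1$: $P_{2,j}(z):=(-Y_{2,j}^*H_{2,j-1}^{-1},\,I_q)R_j(z)v_j$, $Q_{2,j}(z):=-(-Y_{2,j}^*H_{2,j-1}^{-1},\,I_q)R_j(z)(u_{2,j}+zv_js_0)$. For $0\le j\le n-1$ the $2q\times 2q$ matrix polynomial $\widehat U_2^{(2j)}=\begin{pmatrix}\widehat\alpha_2^{(2j)}&\widehat\beta_2^{(2j)}\\ \widehat\gamma_2^{(2j)}&\widehat\delta_2^{(2j)}\end{pmatrix}$ is defined by $\widehat\alpha_2^{(2j)}(z)=I_q-(z-a)(u_{2,j}^*+zs_0v_j^* )R_j^*(\bar z)H_{2,j}^{-1}R_j(a)v_j$, $\widehat\beta_2^{(2j)}(z)=(z-a)\big(s_0+(u_{2,j}^*+zs_0v_j^* )R_j^*(\bar z)H_{2,j}^{-1}R_j(a)(u_{2,j}+av_js_0)\big)$, $\widehat\gamma_2^{(2j)}(z)=-(z-a)v_j^*R_j^*(\bar z)H_{2,j}^{-1}R_j(a)v_j$, $\widehat\delta_2^{(2j)}(z)=I_q+(z-a)v_j^*R_j^*(\bar z)H_{2,j}^{-1}R_j(a)(u_{2,j}+av_js_0)$. *)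

(* Complex matrices are modelled over an arbitrary
   numClosedFieldType C (e.g. algC), with Num.conj as complex conjugation. *)
From HB Require Import structures.
From mathcomp Require Import all_boot all_order all_algebra.
Set Implicit Arguments. Unset Strict Implicit. Unset Printing Implicit Defensive.
Import Order.TTheory GRing.Theory Num.Theory.
Local Open Scope ring_scope.

Section Defs.
Variables (C : numClosedFieldType) (q : nat).

Definition adjmx m p (A : 'M[C]_(m, p)) : 'M[C]_(p, m) := (map_mx Num.conj A)^T.

Definition posdef m (A : 'M[C]_m) : Prop :=
  A = adjmx A /\ forall v : 'cV[C]_m, v != 0 -> 0 < (adjmx v *m A *m v) 0 0.

Definition bdim (j : nat) : nat := (\sum_(l < j.+1) q)%N.

Definition blk (j : nat) (B : nat -> nat -> 'M[C]_q) : 'M[C]_(bdim j) :=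
  @mxblock C j.+1 j.+1 (fun _ => q) (fun _ => q) (fun l k => B l k).

Definition bcol (j : nat) (B : nat -> 'M[C]_q) : 'M[C]_(bdim j, q) :=
  @mxcol C j.+1 (fun _ => q) q (fun l => B l).

Variables (a b : C) (s : nat -> 'M[C]_q).

Definition shat (k : nat) : 'M[C]_q :=
  (- (a * b)) *: s k + (a + b) *: s k.+1 - s k.+2.

Definition H1 j := blk j (fun l k => s (l + k)).
Definition H2 j := blk j (fun l k => shat (l + k)).
Definition K1 j := blk j (fun l k => b *: s (l + k) - s (l + k).+1).
Definition K2 j := blk j (fun l k => - a *: s (l + k) + s (l + k).+1).

(* T_j (T_0 = 0_q is the case j = 0 of the same formula) *)
Definition Tm j := blk j (fun l k => if l == k.+1 then 1%:M else 0).
Definition Rm j (z : C) : 'M[C]_(bdim j) := invmx (1%:M - z *: Tm j).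
Definition vv j := bcol j (fun l => if l == 0%N then 1%:M else 0).
Definition u20 : 'M[C]_q := - (a + b) *: s 0 + s 1.
Definition u2 j := bcol j (fun l => if l == 0%N then u20 else - shat l.-1).

(* Y_{2,i+1} = col(shat_{i+1}, ..., shat_{2i+1}) *)
Definition Y2 i := bcol i (fun l => shat (i.+1 + l)).

Definition H2hat (j : nat) : 'M[C]_q :=
  match j with
  | 0 => shat 0
  | i.+1 => shat (j + j) - adjmx (Y2 i) *m invmx (H2 i) *m Y2 i
  end.

(* the row (-Y_{2,i+1}^* H_{2,i}^{-1}, I_q) of size q x bdim (i+1) *)
Definition prow (i : nat) : 'M[C]_(q, bdim i.+1) :=
  @mxrow C i.+2 (fun _ => q) q
    (fun l : 'I_i.+2 =>
       if (l < i.+1)%N then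
         @submxrow C i.+1 (fun _ => q) q
           (- adjmx (Y2 i) *m invmx (H2 i)) (inord l)
       else 1%:M).

Definition P2 (j : nat) (z : C) : 'M[C]_q :=
  match j with
  | 0 => 1%:M
  | i.+1 => prow i *m Rm i.+1 z *m vv i.+1
  end.

Definition Q2 (j : nat) (z : C) : 'M[C]_q :=
  match j with
  | 0 => - (u20 + z *: s 0)
  | i.+1 => - (prow i *m Rm i.+1 z *m (u2 i.+1 + z *: (vv i.+1 *m s 0)))
  end.

Definition alpha2 j (z : C) : 'M[C]_q :=
  1%:M - (z - a) *: ((adjmx (u2 j) + z *: (s 0 *m adjmx (vv j)))
     *m adjmx (Rm j (Num.conj z)) *m invmx (H2 j) *m Rm j a *m vv j).
Definition beta2 j (z : C) : 'M[C]_q :=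
  (z - a) *: (s 0 + (adjmx (u2 j) + z *: (s 0 *m adjmx (vv j)))
     *m adjmx (Rm j (Num.conj z)) *m invmx (H2 j) *m Rm j a
     *m (u2 j + a *: (vv j *m s 0))).
Definition gamma2 j (z : C) : 'M[C]_q :=
  - ((z - a) *: (adjmx (vv j) *m adjmx (Rm j (Num.conj z)) *m invmx (H2 j)
     *m Rm j a *m vv j)).
Definition delta2 j (z : C) : 'M[C]_q :=
  1%:M + (z - a) *: (adjmx (vv j) *m adjmx (Rm j (Num.conj z)) *m invmx (H2 j)
     *m Rm j a *m (u2 j + a *: (vv j *m s 0))).

End Defs.

From HB Require Import structures.
From mathcomp Require Import all_boot all_order all_algebra.
Import Order.TTheory GRing.Theory Num.Theory.
Local Open Scope ring_scope.
Set Implicit Arguments. Unset Strict Implicit. Unset Printing Implicit Defensive.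

(* H_{2,j+1} has H_{2,j} as leading principal block, bordered by the column
   Y_{2,j+1} and with Schur complement widehat H_{2,j+1}.  The Banachiewicz
   block inversion formula splits H_{2,j+1}^{-1} into E^* H_{2,j}^{-1} E, for
   the truncation E = (I 0), plus the rank-q term P^* widehat H_{2,j+1}^{-1} P,
   where P = (-Y_{2,j+1}^* H_{2,j}^{-1}, I) is the row defining P_{2,j+1} and
   Q_{2,j+1}.  The truncation intertwines the resolvents, E R_{j+1}(w) = R_j(w) E,
   and maps v_{j+1}, u_{2,j+1} to v_j, u_{2,j}; so the first term reproduces the
   entries of widehat U_2^{(2j)} and the second one is the correction. *)

Section Adjoint.
Variable C : numClosedFieldType.

Lemma adjmxM m n p (A : 'M[C]_(m, n)) (B : 'M[C]_(n, p)) :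
  adjmx (A *m B) = adjmx B *m adjmx A.
Proof. by rewrite /adjmx map_mxM trmx_mul. Qed.

Lemma adjmxK m n (A : 'M[C]_(m, n)) : adjmx (adjmx A) = A.
Proof. by apply/matrixP => i k; rewrite /adjmx !mxE conjCK. Qed.

Lemma adjmxD m n (A B : 'M[C]_(m, n)) : adjmx (A + B) = adjmx A + adjmx B.
Proof. by rewrite /adjmx map_mxD linearD. Qed.

Lemma adjmxN m n (A : 'M[C]_(m, n)) : adjmx (- A) = - adjmx A.
Proof. by rewrite /adjmx map_mxN linearN. Qed.

Lemma adjmxB m n (A B : 'M[C]_(m, n)) : adjmx (A - B) = adjmx A - adjmx B.
Proof. by rewrite adjmxD adjmxN. Qed.

Lemma adjmxZ m n (c : C) (A : 'M[C]_(m, n)) :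
  adjmx (c *: A) = Num.conj c *: adjmx A.
Proof. by rewrite /adjmx map_mxZ linearZ. Qed.

Lemma adjmx0 m n : adjmx (0 : 'M[C]_(m, n)) = 0.
Proof. by apply/matrixP => i k; rewrite /adjmx !mxE conjC0. Qed.

Lemma adjmx1 n : adjmx (1%:M : 'M[C]_n) = 1%:M.
Proof. by rewrite /adjmx map_mx1 trmx1. Qed.

Lemma adjmxV n (A : 'M[C]_n) : adjmx (invmx A) = invmx (adjmx A).
Proof. by rewrite /adjmx map_invmx trmx_inv. Qed.

Lemma posdef_herm n (M : 'M[C]_n) : posdef M -> adjmx M = M.
Proof. by case=> <-. Qed.

Lemma posdef_unit n (M : 'M[C]_n) : posdef M -> M \in unitmx.
Proof.
case=> _ Mpos; rewrite unitmxE unitfE; apply/negP => /det0P [v v0 vM].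
have v'0 : adjmx v != 0 by apply: contraNneq v0 => h; rewrite -[v]adjmxK h adjmx0.
by have := Mpos _ v'0; rewrite adjmxK vM mul0mx mxE ltxx.
Qed.

Lemma posdef_congr n m (M : 'M[C]_n) (P L : 'M[C]_(m, n)) :
  posdef M -> L *m adjmx P = 1%:M -> posdef (P *m M *m adjmx P).
Proof.
case=> Mherm Mpos LP; split; first by rewrite !adjmxM adjmxK -Mherm mulmxA.
move=> v v0; have Pv0 : adjmx P *m v != 0.
  by apply: contraNneq v0 => h; rewrite -[v]mul1mx -LP -mulmxA h mulmx0.
by move: (Mpos _ Pv0); rewrite adjmxM adjmxK !mulmxA.
Qed.

End Adjoint.

Section BlockInverse.
Variables (C : numClosedFieldType) (m k N : nat).
Variables (E : 'M[C]_(m, N)) (e : 'M[C]_(k, N)) (H : 'M[C]_N).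
Hypotheses (EEt : E *m adjmx E = 1%:M) (eet : e *m adjmx e = 1%:M)
  (Eet : E *m adjmx e = 0) (Ee_sum : adjmx E *m E + adjmx e *m e = 1%:M)
  (Hpd : posdef H).

Local Notation A := (E *m H *m adjmx E).
Local Notation Y := (E *m H *m adjmx e).

Definition schur_row := e - adjmx Y *m invmx A *m E.
Definition schur_compl := e *m H *m adjmx e - adjmx Y *m invmx A *m Y.

Let eEt : e *m adjmx E = 0.
Proof. by rewrite -[e]adjmxK -adjmxM Eet adjmx0. Qed.

Let Aunit : A \in unitmx.
Proof. exact/posdef_unit/(posdef_congr Hpd EEt). Qed.

Let EH : E *m H = A *m E + Y *m e.
Proof. by rewrite -!mulmxA -!mulmxDr Ee_sum mulmx1. Qed.

Lemma mulmx_schur : schur_row *m H = schur_compl *m e.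
Proof.
have eH : e *m H = adjmx Y *m E + e *m H *m adjmx e *m e.
  rewrite !adjmxM adjmxK (posdef_herm Hpd) -!mulmxA.
  by rewrite -!mulmxDr Ee_sum mulmx1.
(* Freeze A, Y and D, so that reassociating products cannot unfold them. *)
rewrite /schur_row /schur_compl; move: eH EH Aunit.
set A' := A; set Y' := Y; set D := e *m H *m adjmx e.
clearbody A' Y' D => eH EH' A'unit.
rewrite mulmxBl eH -!mulmxA EH' mulmxDr !mulmxA mulVmx // mul1mx mulmxBl.
by rewrite mulmxDr !mulmxA opprD addrACA subrr add0r.
Qed.

Lemma mul_adj_schur : e *m adjmx schur_row = 1%:M.
Proof. by rewrite adjmxB adjmxM mulmxBr mulmxA eEt mul0mx subr0. Qed.

Lemma posdef_schur : posdef schur_compl.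
Proof.
have <- : schur_row *m H *m adjmx schur_row = schur_compl.
  by rewrite mulmx_schur -mulmxA mul_adj_schur mulmx1.
exact: posdef_congr Hpd mul_adj_schur.
Qed.

Lemma invmx_schur : invmx H =
  adjmx E *m invmx A *m E + adjmx schur_row *m invmx schur_compl *m schur_row.
Proof.
have Sunit := posdef_unit posdef_schur.
have Aherm : adjmx (invmx A) = invmx A.
  by rewrite adjmxV !adjmxM adjmxK (posdef_herm Hpd) mulmxA.
set M := _ + _; have MH : M *m H = 1%:M.
  rewrite mulmxDl -[_ *m schur_row *m H]mulmxA mulmx_schur !mulmxA mulmxKV //.
  rewrite -[_ *m E *m H]mulmxA [X in _ *m X + _ = _]EH mulmxDr (mulmxA _ A) mulmxKV //.
  rewrite /schur_row adjmxB !adjmxM Aherm !adjmxK mulmxBl !mulmxA.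
  by rewrite addrACA subrr addr0 Ee_sum.
have [_ Hunit] := mulmx1_unit MH.
by rewrite -[invmx H]mul1mx -MH -mulmxA mulmxV // mulmx1.
Qed.

Lemma adj_invmx_schur p r (X : 'M[C]_(N, p)) (Z : 'M[C]_(N, r)) :
  adjmx X *m invmx H *m Z = adjmx (E *m X) *m invmx A *m (E *m Z)
    + adjmx (schur_row *m X) *m invmx schur_compl *m (schur_row *m Z).
Proof. by rewrite invmx_schur mulmxDr mulmxDl !adjmxM !mulmxA. Qed.

End BlockInverse.

Section BlockMatrices.
Variables (C : numClosedFieldType) (q : nat).
Implicit Types (B : nat -> nat -> 'M[C]_q) (c : nat -> 'M[C]_q).

Definition rblk i k B : 'M[C]_(bdim q i, bdim q k) :=
  @mxblock C i.+1 k.+1 (fun _ => q) (fun _ => q) (fun l l' => B l l').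
Definition brow i c : 'M[C]_(q, bdim q i) :=
  @mxrow C i.+1 (fun _ => q) q (fun l => c l).

Lemma rblk_mul i k r B B' : rblk i k B *m rblk k r B' =
  rblk i r (fun l l' => \sum_(x < k.+1) B l x *m B' x l').
Proof. exact: mul_mxblock. Qed.

Lemma rblk_mulcol i k B c :
  rblk i k B *m bcol k c = bcol i (fun l => \sum_(x < k.+1) B l x *m c x).
Proof. exact: mul_mxblock_mxrow. Qed.

Lemma brow_mulblk i k c B :
  brow i c *m rblk i k B = brow k (fun l => \sum_(x < i.+1) c x *m B x l).
Proof. exact: mul_mxrow_mxblock. Qed.

Lemma brow_mulcol i c c' : brow i c *m bcol i c' = \sum_(x < i.+1) c x *m c' x.
Proof. exact: mul_mxrow_mxcol. Qed.

Lemma bcol_mulrow i k c c' :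
  bcol i c *m brow k c' = rblk i k (fun l l' => c l *m c' l').
Proof. exact: mul_mxcol_mxrow. Qed.

Lemma adj_rblk i k B : adjmx (rblk i k B) = rblk k i (fun l l' => adjmx (B l' l)).
Proof. by apply/matrixP => x y; rewrite /adjmx !mxE. Qed.

Lemma adj_brow i c : adjmx (brow i c) = bcol i (fun l => adjmx (c l)).
Proof. by apply/matrixP => x y; rewrite /adjmx !mxE. Qed.

Lemma eq_rblk i k B B' :
  (forall l l', (l < i.+1)%N -> (l' < k.+1)%N -> B l l' = B' l l') ->
  rblk i k B = rblk i k B'.
Proof. by move=> eqB; apply: eq_mxblock => x y; apply: eqB. Qed.

Lemma eq_bcol i c c' : (forall l, (l < i.+1)%N -> c l = c' l) -> bcol i c = bcol i c'.
Proof. by move=> eqc; apply: eq_mxcol => x; apply: eqc. Qed.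

Lemma eq_brow i c c' : (forall l, (l < i.+1)%N -> c l = c' l) -> brow i c = brow i c'.
Proof. by move=> eqc; apply: eq_mxrow => x; apply: eqc. Qed.

Lemma rblkD i k B B' :
  rblk i k B + rblk i k B' = rblk i k (fun l l' => B l l' + B' l l').
Proof. by apply/matrixP => x y; rewrite !mxE. Qed.

Lemma rblk0 i k : rblk i k (fun _ _ => 0) = 0.
Proof. by apply/matrixP => x y; rewrite !mxE. Qed.

Lemma bcol0 i : bcol i (fun _ => 0 : 'M[C]_q) = 0.
Proof. by apply/matrixP => x y; rewrite !mxE. Qed.

Definition bdelta (l k : nat) : 'M[C]_q := if l == k then 1%:M else 0.

Lemma bdeltaC l k : bdelta l k = bdelta k l.
Proof. by rewrite /bdelta eq_sym. Qed.

Lemma adj_bdelta l k : adjmx (bdelta l k) = bdelta k l.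
Proof. by rewrite /bdelta eq_sym; case: eqP => _; rewrite ?adjmx1 ?adjmx0. Qed.

Lemma bdelta_mul m l k (M : 'M[C]_(q, m)) : bdelta l k *m M = if l == k then M else 0.
Proof. by rewrite /bdelta; case: eqP; rewrite ?mul1mx ?mul0mx. Qed.

Lemma mul_bdelta m l k (M : 'M[C]_(m, q)) : M *m bdelta l k = if l == k then M else 0.
Proof. by rewrite /bdelta; case: eqP; rewrite ?mulmx1 ?mulmx0. Qed.

Lemma rblk1 i : rblk i i bdelta = 1%:M.
Proof.
rewrite -(mxdiagZ (p_ := fun _ : 'I_i.+1 => q) 1); apply: eq_mxblock => x y.
by rewrite /bdelta conform_mx_id.
Qed.

Lemma sum_delta (V : nmodType) (F : nat -> V) n k :
  \sum_(x < n) (if nat_of_ord x == k then F x else 0) = if (k < n)%N then F k else 0.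
Proof. by rewrite -big_mkcond big_ord1_eq. Qed.

Definition trunc_mx i := rblk i i.+1 bdelta.
Definition last_mx i := brow i.+1 (fun k => bdelta k i.+1).

Lemma adj_trunc_mx i : adjmx (trunc_mx i) = rblk i.+1 i bdelta.
Proof. by rewrite adj_rblk; apply: eq_rblk => l l' _ _; rewrite adj_bdelta bdeltaC. Qed.

Lemma adj_last_mx i : adjmx (last_mx i) = bcol i.+1 (fun k => bdelta k i.+1).
Proof. by rewrite adj_brow; apply: eq_bcol => l _; rewrite adj_bdelta bdeltaC. Qed.

Lemma trunc_mx_mul i k B : trunc_mx i *m rblk i.+1 k B = rblk i k B.
Proof.
rewrite rblk_mul; apply: eq_rblk => l l' ltl _.
under eq_bigr do rewrite bdelta_mul eq_sym.
by rewrite (sum_delta (B^~ l')) (leqW ltl).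
Qed.

Lemma mul_adj_trunc_mx i k B : rblk k i.+1 B *m adjmx (trunc_mx i) = rblk k i B.
Proof.
rewrite adj_trunc_mx rblk_mul; apply: eq_rblk => l l' _ ltl'.
under eq_bigr do rewrite mul_bdelta.
by rewrite (sum_delta (B l)) (leqW ltl').
Qed.

Lemma last_mx_mul i k B : last_mx i *m rblk i.+1 k B = brow k (B i.+1).
Proof.
rewrite brow_mulblk; apply: eq_brow => l _.
under eq_bigr do rewrite bdelta_mul.
by rewrite (sum_delta (B^~ l)) ltnSn.
Qed.

Lemma mul_adj_last_mx i k B :
  rblk k i.+1 B *m adjmx (last_mx i) = bcol k (B^~ i.+1).
Proof.
rewrite adj_last_mx rblk_mulcol; apply: eq_bcol => l _.
under eq_bigr do rewrite mul_bdelta.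
by rewrite (sum_delta (B l)) ltnSn.
Qed.

Lemma trunc_mx_mulcol i c : trunc_mx i *m bcol i.+1 c = bcol i c.
Proof.
rewrite rblk_mulcol; apply: eq_bcol => l ltl.
under eq_bigr do rewrite bdelta_mul eq_sym.
by rewrite (sum_delta c) (leqW ltl).
Qed.

Lemma brow_adj_last_mx i c : brow i.+1 c *m adjmx (last_mx i) = c i.+1.
Proof.
rewrite adj_last_mx brow_mulcol.
under eq_bigr do rewrite mul_bdelta.
by rewrite (sum_delta c) ltnSn.
Qed.

Lemma trunc_mx_adj i : trunc_mx i *m adjmx (trunc_mx i) = 1%:M.
Proof. by rewrite mul_adj_trunc_mx rblk1. Qed.

Lemma last_mx_adj i : last_mx i *m adjmx (last_mx i) = 1%:M.
Proof. by rewrite brow_adj_last_mx /bdelta eqxx. Qed.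

Lemma trunc_mx_adj_last i : trunc_mx i *m adjmx (last_mx i) = 0.
Proof.
rewrite mul_adj_last_mx -(bcol0 i); apply: eq_bcol => l ltl.
by rewrite /bdelta ltn_eqF.
Qed.

Lemma adj_trunc_last_mx_sum i :
  adjmx (trunc_mx i) *m trunc_mx i + adjmx (last_mx i) *m last_mx i = 1%:M.
Proof.
rewrite adj_trunc_mx adj_last_mx rblk_mul bcol_mulrow rblkD -rblk1.
apply: eq_rblk => l l' ltl _.
under eq_bigr do rewrite bdelta_mul eq_sym.
rewrite (sum_delta (bdelta^~ l')) bdelta_mul.
case: (ltnP l i.+1) => lei; first by rewrite (ltn_eqF lei) addr0.
have -> : l = i.+1 by apply/eqP; rewrite eqn_leq lei -ltnS ltl.
by rewrite eqxx add0r bdeltaC.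
Qed.

End BlockMatrices.

Arguments bdelta {C q}.

Lemma unitmx_1_sub_nilpotent (C : numClosedFieldType) n (M : 'M[C]_n) k :
  M ^+ k = 0 -> 1%:M - M \in unitmx.
Proof.
move=> Mk0; have := subrX1 M k; rewrite Mk0 sub0r => geom.
suff /mulmx1_unit[] : (1%:M - M) *m (\sum_(l < k) M ^+ l) = 1%:M by [].
by rewrite mulmxE -opprB mulNr -geom opprK.
Qed.

Section Shift.
Variables (C : numClosedFieldType) (q : nat).

Lemma TmE i : Tm C q i = rblk i i (fun l k => bdelta l k.+1).
Proof. by []. Qed.

Lemma TmX i k : Tm C q i ^+ k = rblk i i (fun l m => bdelta l (m + k)).
Proof.
elim: k => [|k IHk].
  by rewrite expr0 -[1]/(1%:M) -(rblk1 C q i); apply: eq_rblk => l m _ _; rewrite addn0.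
rewrite exprSr -mulmxE IHk TmE rblk_mul; apply: eq_rblk => l m ltl _.
under eq_bigr do rewrite mul_bdelta.
rewrite (sum_delta (fun x => bdelta l (x + k))) addSnnS.
case: ltnP => // lem; rewrite ltnS in lem; rewrite /bdelta; case: eqP => // eql.
by move: ltl; rewrite eql addnS ltnS ltnNge (leq_trans lem (leq_addr k m)).
Qed.

Lemma TmX_nil i : Tm C q i ^+ i.+1 = 0.
Proof.
rewrite TmX -(rblk0 C q i i); apply: eq_rblk => l m ltl _.
by rewrite /bdelta ltn_eqF // (leq_trans ltl (leq_addl m _)).
Qed.

Lemma unitmx_resolvent i (w : C) : 1%:M - w *: Tm C q i \in unitmx.
Proof.
apply: (@unitmx_1_sub_nilpotent _ _ _ i.+1).
have exprZ k : (w *: Tm C q i) ^+ k = w ^+ k *: Tm C q i ^+ k.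
  elim: k => [|k IHk]; first by rewrite !expr0 scale1r.
  by rewrite !exprSr IHk -!mulmxE -scalemxAl -scalemxAr scalerA.
by rewrite exprZ TmX_nil scaler0.
Qed.

Lemma trunc_mx_Tm i : trunc_mx C q i *m Tm C q i.+1 = Tm C q i *m trunc_mx C q i.
Proof.
rewrite TmE trunc_mx_mul TmE /trunc_mx rblk_mul; apply: eq_rblk => l k ltl _.
under eq_bigr do rewrite mul_bdelta.
rewrite (sum_delta (bdelta l \o succn)); case: ltnP => // lek.
by rewrite /bdelta ltn_eqF // leqW // (leq_trans ltl lek).
Qed.

Lemma trunc_mx_Rm i (w : C) : trunc_mx C q i *m Rm q i.+1 w = Rm q i w *m trunc_mx C q i.
Proof.
have [u1 u0] := (unitmx_resolvent i.+1 w, unitmx_resolvent i w).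
have ET : trunc_mx C q i *m (1%:M - w *: Tm C q i.+1) =
          (1%:M - w *: Tm C q i) *m trunc_mx C q i.
  by rewrite mulmxBr mulmxBl mulmx1 mul1mx -scalemxAr -scalemxAl trunc_mx_Tm.
rewrite /Rm; set M0 := 1%:M - _ in u0 ET *; set M1 := 1%:M - _ in u1 ET *.
transitivity (invmx M0 *m (M0 *m trunc_mx C q i) *m invmx M1).
  by rewrite mulmxA mulVmx // mul1mx.
by rewrite -ET mulmxA mulmxK.
Qed.

End Shift.

Section Truncation.
Variables (C : numClosedFieldType) (q : nat) (a b : C) (s : nat -> 'M[C]_q).

Local Notation E i := (trunc_mx C q i).
Local Notation e i := (last_mx C q i).

Lemma H2E j : H2 a b s j = rblk j j (fun l k => shat a b s (l + k)).
Proof. by []. Qed.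

Lemma H2_trunc i : E i *m H2 a b s i.+1 *m adjmx (E i) = H2 a b s i.
Proof. by rewrite H2E trunc_mx_mul mul_adj_trunc_mx. Qed.

Lemma H2_trunc_last i : E i *m H2 a b s i.+1 *m adjmx (e i) = Y2 a b s i.
Proof.
rewrite H2E trunc_mx_mul mul_adj_last_mx.
by apply: eq_bcol => l _; rewrite addnC.
Qed.

Lemma H2_last i : e i *m H2 a b s i.+1 *m adjmx (e i) = shat a b s (i.+1 + i.+1).
Proof. by rewrite H2E last_mx_mul brow_adj_last_mx. Qed.

Lemma posdef_H2_le N k : posdef (H2 a b s N) -> (k <= N)%N -> posdef (H2 a b s k).
Proof.
elim: N => [|N IHN] HN; first by rewrite leqn0 => /eqP->.
rewrite leq_eqVlt ltnS => /predU1P[->//|]; apply: IHN.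
by rewrite -H2_trunc; apply: posdef_congr HN (trunc_mx_adj C q N).
Qed.

Lemma prow_schur_row i :
  prow a b s i = schur_row (E i) (e i) (H2 a b s i.+1).
Proof.
rewrite /schur_row H2_trunc H2_trunc_last -mulNmx addrC.
set X := - _; rewrite -[X](@submxrowK C i.+1 (fun _ => q) q).
rewrite /trunc_mx /rblk mul_mxrow_mxblock /last_mx /brow -mxrowD /prow.
apply: eq_mxrow => k.
under eq_bigr => x _ do rewrite mul_bdelta -{2}(inord_val x).
rewrite (sum_delta (submxrow X \o inord)) /bdelta.
case: ltnP => [ltk | lek]; first by rewrite (ltn_eqF ltk) addr0 /X mulNmx.
by rewrite add0r (_ : k == i.+1 :> nat) // eqn_leq lek -ltnS ltn_ord.
Qed.

Lemma H2hat_schur i :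
  H2hat a b s i.+1 = schur_compl (E i) (e i) (H2 a b s i.+1).
Proof. by rewrite /schur_compl H2_last H2_trunc H2_trunc_last. Qed.

Lemma adj_invmx_H2 i : posdef (H2 a b s i.+1) ->
  forall p r (X : 'M[C]_(bdim q i.+1, p)) (Z : 'M[C]_(bdim q i.+1, r)),
  adjmx X *m invmx (H2 a b s i.+1) *m Z =
    adjmx (E i *m X) *m invmx (H2 a b s i) *m (E i *m Z)
  + adjmx (prow a b s i *m X) *m invmx (H2hat a b s i.+1) *m (prow a b s i *m Z).
Proof.
move=> Hpd p r X Z; rewrite H2hat_schur prow_schur_row -[H2 a b s i in RHS]H2_trunc.
exact: (adj_invmx_schur (trunc_mx_adj C q i) (last_mx_adj C q i)
  (trunc_mx_adj_last C q i) (adj_trunc_last_mx_sum C q i) Hpd X Z).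
Qed.

Definition Rv j w := Rm q j w *m vv C q j.
Definition Ru j w := Rm q j w *m (u2 a b s j + w *: (vv C q j *m s 0)).

Lemma trunc_mx_Rv i w : E i *m Rv i.+1 w = Rv i w.
Proof. by rewrite /Rv mulmxA trunc_mx_Rm -mulmxA trunc_mx_mulcol. Qed.

Lemma trunc_mx_Ru i w : E i *m Ru i.+1 w = Ru i w.
Proof.
rewrite /Ru mulmxA trunc_mx_Rm -mulmxA mulmxDr -scalemxAr mulmxA.
by rewrite !trunc_mx_mulcol.
Qed.

Lemma P2E i w : P2 a b s i.+1 w = prow a b s i *m Rv i.+1 w.
Proof. by rewrite /Rv mulmxA. Qed.

Lemma Q2E i w : Q2 a b s i.+1 w = - (prow a b s i *m Ru i.+1 w).
Proof. by rewrite /Ru mulmxA. Qed.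

Hypothesis s0herm : adjmx (s 0) = s 0.

Lemma adj_Ru j z : adjmx (Ru j (Num.conj z)) =
  (adjmx (u2 a b s j) + z *: (s 0 *m adjmx (vv C q j))) *m adjmx (Rm q j (Num.conj z)).
Proof. by rewrite /Ru adjmxM adjmxD adjmxZ conjCK adjmxM s0herm. Qed.

Lemma alpha2E j z : alpha2 a b s j z =
  1%:M - (z - a) *: (adjmx (Ru j (Num.conj z)) *m invmx (H2 a b s j) *m Rv j a).
Proof. by rewrite adj_Ru /alpha2 /Rv !mulmxA. Qed.

Lemma beta2E j z : beta2 a b s j z =
  (z - a) *: (s 0 + adjmx (Ru j (Num.conj z)) *m invmx (H2 a b s j) *m Ru j a).
Proof. by rewrite adj_Ru /beta2 /Ru !mulmxA. Qed.

Lemma gamma2E j z : gamma2 a b s j z =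
  - ((z - a) *: (adjmx (Rv j (Num.conj z)) *m invmx (H2 a b s j) *m Rv j a)).
Proof. by rewrite /gamma2 /Rv adjmxM !mulmxA. Qed.

Lemma delta2E j z : delta2 a b s j z =
  1%:M + (z - a) *: (adjmx (Rv j (Num.conj z)) *m invmx (H2 a b s j) *m Ru j a).
Proof. by rewrite /delta2 /Rv /Ru adjmxM !mulmxA. Qed.

End Truncation.

Unset Implicit Arguments. Set Strict Implicit. Set Printing Implicit Defensive.

Theorem mainTheorem1 (C : numClosedFieldType) (q n : nat) (a b : C)
  (s : nat -> 'M[C]_q) :
  (0 < q)%N ->
  a \is Num.real -> b \is Num.real -> a < b ->
  (forall k, (k <= (n + n).+1)%N -> s k = adjmx (s k)) ->
  posdef (H1 s n) -> posdef (H2 a b s n.-1) ->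
  posdef (K1 b s n) -> posdef (K2 a s n) ->
  forall j : nat, (1 <= j)%N -> (j <= n - 1)%N -> forall z : C,
    [/\ alpha2 a b s j z = alpha2 a b s j.-1 z
          + (z - a) *: (adjmx (Q2 a b s j (Num.conj z)) *m invmx (H2hat a b s j)
                         *m P2 a b s j a),
        beta2 a b s j z = beta2 a b s j.-1 z
          + (z - a) *: (adjmx (Q2 a b s j (Num.conj z)) *m invmx (H2hat a b s j)
                         *m Q2 a b s j a),
        gamma2 a b s j z = gamma2 a b s j.-1 z
          - (z - a) *: (adjmx (P2 a b s j (Num.conj z)) *m invmx (H2hat a b s j)
                         *m P2 a b s j a)
      & delta2 a b s j z = delta2 a b s j.-1 z
          - (z - a) *: (adjmx (P2 a b s j (Num.conj z)) *m invmx (H2hat a b s j)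
                         *m Q2 a b s j a)].
Proof.
move=> _ _ _ _ s_herm _ H2pd _ _ [//|i] _ le_in z.
have s0herm : adjmx (s 0) = s 0 by rewrite -s_herm.
have Hpd : posdef (H2 a b s i.+1) by apply: posdef_H2_le H2pd _; rewrite -subn1.
rewrite -pred_Sn !alpha2E // !beta2E // !gamma2E // !delta2E //.
rewrite !(adj_invmx_H2 Hpd) !trunc_mx_Rv !trunc_mx_Ru !P2E !Q2E.
by split; rewrite ?adjmxN ?mulNmx ?mulmxN ?opprK ?scalerN ?scalerDr ?opprD ?addrA ?opprK.
Qed.
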